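(* Fix $L\in\mathbb Z$ and work on $Y_L=\mathbb R\times(0,2^L]\times\mathbb R$ with the objects described in the context. The quadruple $(Y_L,\mu,\nu,\mathcal C)$, where $\mathcal C(A)=\mathcal M(\mathcal N(\mathcal Q(A)))$ and $\mathcal E=\mathcal D_L$, satisfies the crop condition for every choice of parameters $\Phi\ge2$, $K\ge1$.
   Context: Dyadic intervals $I(m,l)=(2^lm,2^l(m+1)]$; tiles $H(m,l,n)=I(m,l)\times(2^{l-1},2^l]\times I(n,-l)$. $\mathcal D_L$ = strips $D(m,l)=I(m,l)\times(0,2^l]\times\mathbb R$ with $l\le L$, $\sigma(D(m,l))=2^l$. $\mathcal T_L$ = trees $T(m,l,n)=\bigcup_{l'\le l}\bigcup_{m':\,I(m',l')\subseteq I(m,l)}H(m',l',N(n,l'))$ with $l\le L$ ($N(n,l')$ the integer with $I(n,-l)\subseteq I(N(n,l'),-l')$), $\tau(T(m,l,n))=2^l$. Outer measures on $Y_L$: $\mu(A)=\inf\{\sum_{S\in\mathcal S'}\sigma(S):\mathcal S'\subseteq\mathcal D_L,A\subseteq\bigcup\mathcal S'\}$, $\nu$ likewise from $(\mathcal T_L,\tau)$. $\pi$ = projection onto first coordinate, $|\cdot|$ Lebesgue measure. For $E\in\mathcal D_L$, $E_+=\{(x,s,\xi)\in E:s>\sigma(E)/2\}$. $\mathcal Q(A)=\{E\in\mathcal D_L:E_+\cap A\ne\varnothing\}$. For $\mathcal D_1\subseteq\mathcal D_L$: $\mathcal N(\mathcal D_1)=\{E\in\mathcal D_L:|\pi(E)\cap\pi(\bigcup\mathcal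 D_1)|\ge|\pi(E)|/2\}$; $\mathcal M(\mathcal D_1)$ = elements of $\mathcal D_1$ maximal under inclusion. $\mathbf B_{\mathcal C}(A)=\bigcup_{E\in\mathcal C(A)}E$. A $\mu$-covering function with parameter $\Phi$: a map $\mathcal C$ assigning to each $A$ a subcollection of pairwise disjoint elements of $\mathcal E$ with $A\subseteq\mathbf B_{\mathcal C}(A)$, $\mu(\mathbf B_{\mathcal C}(A))\le\Phi\mu(A)$, $\mathbf B_{\mathcal C}$ monotone. A collection $\mathcal A$ of pairwise disjoint sets is $\nu$-Carathéodory (parameter $K$) if $\sum_{A\in\mathcal A}\nu(U\cap A)\le K\nu(U\cap\bigcup\mathcal A)$ for all $U$. Crop condition (parameters $\Phi,K$): $\mathcal C$ is a $\mu$-covering function with parameter $\Phi$, and for every collection $\mathcal A\subseteq\mathcal E$ there exists a $\nu$-Carathéodory (parameter $K$) subcollection $\mathcal D'\subseteq\mathcal A$ such that for every $F$ disjoint from $\bigcup_{D\in\mathcal D'}D$, $\mathbf B_{\mathcal C}(F)=\bigcup_{E\in\mathcal C(F)\setminus\mathcal A}E$. *)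

From HB Require Import structures.
From mathcomp Require Import all_boot all_order all_algebra.
From mathcomp Require Import all_classical all_reals all_analysis.
Set Implicit Arguments. Unset Strict Implicit. Unset Printing Implicit Defensive.
Import Order.TTheory GRing.Theory Num.Theory.
Local Open Scope classical_set_scope.
Local Open Scope ring_scope.

Section Defs.
Variable R : realType.

(* points (x, s, xi) of R x R x R, encoded as ((x, s), xi) *)
Definition pt := (R * R * R)%type.
Definition pi1 (p : pt) : R := p.1.1.

Definition dI (m l : int) : set R :=
  [set x | (2:R) ^ l * m%:~R < x /\ x <= (2:R) ^ l * (m + 1)%:~R].

Definition YL (L : int) : set pt := [set p | 0 < p.1.2 /\ p.1.2 <= (2:R) ^ L].

Definition strip (j : int * int) : set pt :=
  [set p | dI j.1 j.2 p.1.1 /\ 0 < p.1.2 /\ p.1.2 <= (2:R) ^ j.2].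
Definition stripIdx (L : int) : set (int * int) := [set j | (j.2 <= L)%R].
Definition sigma (j : int * int) : R := (2:R) ^ j.2.

Definition strip_plus (j : int * int) : set pt :=
  [set p | strip j p /\ sigma j / 2 < p.1.2].

Definition tile (m l n : int) : set pt :=
  [set p | dI m l p.1.1 /\ (2:R) ^ (l - 1) < p.1.2 /\ p.1.2 <= (2:R) ^ l
           /\ dI n (- l) p.2].

(* trees T(m,l,n), indexed by ((m,l),n); N(n,l') is the (unique) n' with
   I(n,-l) included in I(n',-l') *)
Definition tree (t : int * int * int) : set pt :=
  let: (m, l, n) := t in
  [set p | exists m' l' n' : int, [/\ (l' <= l)%R, dI m' l' `<=` dI m l,
           dI n (- l) `<=` dI n' (- l') & tile m' l' n' p]].
Definition treeIdx (L : int) : set (int * int * int) := [set t | (t.1.2 <= L)%R].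
Definition tau (t : int * int * int) : R := (2:R) ^ t.1.2.

Definition mu (L : int) (A : set pt) : \bar R :=
  ereal_inf [set S | exists J : set (int * int),
    [/\ J `<=` stripIdx L, A `<=` \bigcup_(j in J) strip j
      & S = \esum_(j in J) (sigma j)%:E]].
Definition nu (L : int) (A : set pt) : \bar R :=
  ereal_inf [set S | exists J : set (int * int * int),
    [/\ J `<=` treeIdx L, A `<=` \bigcup_(t in J) tree t
      & S = \esum_(t in J) (tau t)%:E]].

Definition calQ (L : int) (A : set pt) : set (int * int) :=
  [set j | stripIdx L j /\ strip_plus j `&` A !=set0].
Definition calN (L : int) (D1 : set (int * int)) : set (int * int) :=
  [set j | stripIdx L j /\
     lebesgue_measure (pi1 @` strip j) * (2^-1)%:E <=
     lebesgue_measure (pi1 @` strip j `&` pi1 @` \bigcup_(i in D1) strip i)]%E.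
Definition calM (D1 : set (int * int)) : set (int * int) :=
  [set j | D1 j /\ forall j', D1 j' -> strip j `<=` strip j' -> strip j' = strip j].
Definition calC (L : int) (A : set pt) : set (int * int) :=
  calM (calN L (calQ L A)).

Definition BC (C : set pt -> set (int * int)) (A : set pt) : set pt :=
  \bigcup_(j in C A) strip j.

Definition pairwise_disjoint_strips (S : set (int * int)) : Prop :=
  forall i j, S i -> S j -> strip i <> strip j -> strip i `&` strip j = set0.

Definition mu_covering (L : int) (C : set pt -> set (int * int)) (Phi : R) : Prop :=
  (forall A, A `<=` YL L ->
     [/\ C A `<=` stripIdx L, pairwise_disjoint_strips (C A),
         A `<=` BC C A & (mu L (BC C A) <= Phi%:E * mu L A)%E]) /\
  (forall A A', A `<=` YL L -> A' `<=` YL L -> A `<=` A' -> BC C A `<=` BC C A').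

Definition nu_caratheodory (L : int) (K : R) (Dp : set (int * int)) : Prop :=
  pairwise_disjoint_strips Dp /\
  forall U, U `<=` YL L ->
    (\esum_(j in Dp) nu L (U `&` strip j) <=
     K%:E * nu L (U `&` \bigcup_(j in Dp) strip j))%E.

Definition crop_condition (L : int) (C : set pt -> set (int * int)) (Phi K : R) : Prop :=
  mu_covering L C Phi /\
  forall calA : set (int * int), calA `<=` stripIdx L ->
    exists Dp : set (int * int),
      [/\ Dp `<=` calA, nu_caratheodory L K Dp &
          forall F, F `<=` YL L -> F `&` \bigcup_(j in Dp) strip j = set0 ->
            BC C F = \bigcup_(j in C F `\` calA) strip j].

End Defs.

(* Strips of D_L that meet are nested, so the maximal elements of any family
   are pairwise disjoint, and since levels are bounded by L every strip of a
   family lies below a maximal one.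

   Covering bound: every E ∈ C(A) has at least half of its base in the shadow
   X = π(⋃ Q(A)), so Σ σ(E) ≤ 2|X|.  A strip cover of A also covers X, because
   a point of A in the upper half E_+ of a strip forces E below the covering
   strip; hence |X| ≤ Σ σ over the cover, and μ(B_C(A)) ≤ 2 μ(A).

   Crop condition, with D' = M(A): restricting a tree T to a strip E gives a
   tree of size |I_E ∩ I_T|, and over disjoint strips these sizes add up to at
   most τ(T); so ν is superadditive on disjoint strips and K = 1 suffices.
   If F misses ⋃ M(A), no E ∈ C(F) lies in A: such an E is below some D ∈ M(A)
   and its base meets the base of some E' ∈ Q(F); E' cannot lie below D (the
   point of F in E'_+ would lie in D), so E' is above E, contradicting the
   maximality of E in N(Q(F)). *)

From Pilot Require Import Defs.
From HB Require Import structures.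
From mathcomp Require Import all_boot all_order all_algebra.
From mathcomp Require Import all_classical all_reals all_analysis.
From mathcomp Require Import zify.

Set Implicit Arguments.
Unset Strict Implicit.
Unset Printing Implicit Defensive.
Import Order.TTheory GRing.Theory Num.Theory.
Local Open Scope classical_set_scope.
Local Open Scope ring_scope.

Section esum_extra.
Context {R : realType}.
Local Open Scope ereal_scope.

Lemma le_esum_subset (T : choiceType) (A B : set T) (a : T -> \bar R) :
  (forall t, 0 <= a t) -> B `<=` A -> \esum_(t in B) a t <= \esum_(t in A) a t.
Proof.
move=> a0 BA; rewrite [leLHS]esum_mkcond [leRHS]esum_mkcond.
apply: le_esum => t _; case: ifPn => [/set_mem/BA/mem_set -> //|_].
by case: ifP.
Qed.

Lemma ge0_esumZl (T : choiceType) (P : set T) (a : T -> \bar R) (x : R) :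
  (0 <= x)%R -> (forall t, 0 <= a t) ->
  \esum_(t in P) (x%:E * a t) = x%:E * \esum_(t in P) a t.
Proof.
move=> x0 a0; rewrite /esum -ereal_supZl //; last first.
  by apply/set0P; exists (\sum_(t \in set0) a t), set0 => //; exact: fsets_set0.
rewrite image_comp; congr ereal_sup; apply: eq_imagel => F _ /=.
by rewrite ge0_mule_fsumr.
Qed.

Lemma le_esum_image (T T' : choiceType) (A : set T) (f : T -> T') (a : T' -> \bar R) :
  (forall s, 0 <= a s) -> \esum_(s in f @` A) a s <= \esum_(t in A) a (f t).
Proof.
move=> a0; have [->|/set0P [t0 _]] := eqVneq A set0.
  by rewrite image_set0 !esum_set0.
pose g s := if pselect ((f @` A) s) is left h then projT1 (cid2 h) else t0.
have gK s : (f @` A) s -> A (g s) /\ f (g s) = s.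
  by move=> fAs; rewrite /g; case: pselect => // h; case: (cid2 h).
rewrite (eq_esum (b := a \o f \o g)); last by move=> s /gK [_ fg]; rewrite /= fg.
rewrite -(esum_image _ g (a \o f)); last first.
  move=> s s' /set_mem/gK [_ es] /set_mem/gK [_ es'] e.
  by rewrite -es -es' e.
by apply: le_esum_subset => [t|_ [s /gK [As _] <-]] //=.
Qed.

Lemma esum_swap (T1 T2 : choiceType) (I : set T1) (J : set T2) (a : T1 -> T2 -> \bar R) :
  (forall i j, 0 <= a i j) ->
  \esum_(i in I) \esum_(j in J) a i j = \esum_(j in J) \esum_(i in I) a i j.
Proof.
move=> a0; rewrite (esum_esum (J := fun=> J)) // (esum_esum (J := fun=> I)) //.
rewrite (reindex_esum (J `*`` fun=> I) (I `*`` fun=> J) (fun x => (x.2, x.1))) //.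
split => [[i j] [/= ? ?]|[i1 i2] [j1 j2] /= _ _ [-> ->]|[i j] [/= ? ?]] //.
by exists (j, i).
Qed.

End esum_extra.

Section measure_countable_bigcup.
Context d (X : measurableType d) (R : realType) (mu : {measure set X -> \bar R}).
Context (T : countType) (P : set T) (F : T -> set X).
Hypothesis mF : forall i, P i -> measurable (F i).
Local Open Scope ereal_scope.

Let G n := if pickle_inv n is Some i then F i else set0.
Let D := pickle @` P.

Let GE i : G (pickle i) = F i. Proof. by rewrite /G pickleK_inv. Qed.

Let mG n : D n -> measurable (G n). Proof. by case=> i Pi <-; rewrite GE; exact: mF. Qed.

Let bigcupG : \bigcup_(i in P) F i = \bigcup_(n in D) G n.
Proof.
apply/seteqP; split => x [i Pi Fix]; first by exists (pickle i); [exists i|rewrite GE].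
by case: Pi Fix => j Pj <-; rewrite GE; exists j.
Qed.

Let esumG : \esum_(i in P) mu (F i) = \sum_(n <oo | n \in D) mu (G n).
Proof.
rewrite nneseries_esum // set_mem_set esum_image; last exact: in2W (pcan_inj pickleK).
by apply: eq_esum => i _; rewrite GE.
Qed.

Lemma bigcup_measurable_countable : measurable (\bigcup_(i in P) F i).
Proof.
rewrite bigcup_mkcond; apply: countable_bigcupT_measurable => [|i]; first exact: countableP.
by case: ifPn => [/set_mem/mF|].
Qed.

Lemma measure_bigcup_countable : trivIset P F ->
  mu (\bigcup_(i in P) F i) = \esum_(i in P) mu (F i).
Proof.
move=> tF; rewrite bigcupG esumG measure_bigcup //.
move=> _ _ [i Pi <-] [j Pj <-]; rewrite !GE => FiFj.
by rewrite (tF i j Pi Pj FiFj).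
Qed.

Lemma measure_bigcup_countable_le :
  mu (\bigcup_(i in P) F i) <= \esum_(i in P) mu (F i).
Proof.
rewrite bigcupG esumG eseries_mkcond.
have mkcond n : (if n \in D then mu (G n) else 0) =
    mu (if n \in D then G n else set0) by case: ifP; rewrite ?measure0.
under eq_eseriesr do rewrite mkcond.
rewrite bigcup_mkcond; apply: measure_sigma_subadditive => //.
- by move=> n; case: ifPn => // /set_mem /mG.
- by rewrite -bigcup_mkcond -bigcupG; exact: bigcup_measurable_countable.
Qed.

End measure_countable_bigcup.

Section dyadic.
Variable R : realType.
Implicit Types (m l : int) (x : R) (i j : int * int).
Local Notation dI := (@dI R).
Local Notation strip := (@strip R).
Local Notation pi1 := (@pi1 R).

Lemma exprz2_gt0 l : 0 < (2:R) ^ l.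
Proof. exact: exprz_gt0. Qed.

Lemma ler_exprz2 l l' : ((2:R) ^ l <= 2 ^ l') = (l <= l').
Proof. by rewrite ler_eXz2l ?ltr1n. Qed.

Lemma ltr_exprz2 l l' : ((2:R) ^ l < 2 ^ l') = (l < l').
Proof. by rewrite ltr_eXz2l ?ltr1n. Qed.

Lemma ltr_exprz2_pred l l' : ((2:R) ^ (l - 1) < 2 ^ l') = (l <= l').
Proof. by rewrite ltr_exprz2; apply/idP/idP; lia. Qed.

Lemma exprz2_pred l : (2:R) ^ (l - 1) = 2 ^ l / 2.
Proof. by rewrite expfzDr // -invr_expz expr1z. Qed.

Lemma exprz2_split l l' : l <= l' -> exists2 d : int, 0 < d & (2:R) ^ l' = 2 ^ l * d%:~R.
Proof.
move=> ll'; set k := `|l' - l|%N.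
have -> : l' = l + k%:Z by rewrite /k gez0_abs ?subr_ge0 //; lia.
exists (2 ^ k)%N; first by rewrite ltz_nat expn_gt0.
by rewrite expfzDr // -exprnP -pmulrn natrX.
Qed.

Lemma dIE m l x : dI m l x <-> m%:~R < x / 2 ^ l <= (m + 1)%:~R.
Proof.
rewrite ltr_pdivlMr ?ler_pdivrMr ?exprz2_gt0 // ![_ * 2 ^ l]mulrC.
by split => [[-> ->]|/andP].
Qed.

Lemma dIE_ceil m l x : dI m l x <-> m = Num.ceil (x / 2 ^ l) - 1.
Proof.
rewrite dIE; have := ceil_eq (x / 2 ^ l) (m + 1); rewrite addrK => <-.
by split => [/eqP ->|->]; rewrite ?addrK ?subrK.
Qed.

Lemma dI_unique m m' l x : dI m l x -> dI m' l x -> m = m'.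
Proof. by move=> /dIE_ceil -> /dIE_ceil ->. Qed.

Lemma dI_cover l x : exists m, dI m l x.
Proof. by exists (Num.ceil (x / 2 ^ l) - 1); apply/dIE_ceil. Qed.

Lemma dI_right_endpoint m l : dI m l (2 ^ l * (m + 1)%:~R).
Proof. by split => //; rewrite ltr_pM2l ?exprz2_gt0 // ltr_int ltzD1. Qed.

Lemma dI_nested m l m' l' x : l <= l' -> dI m l x -> dI m' l' x ->
  dI m l `<=` dI m' l'.
Proof.
move=> ll' /dIE/andP[mx xm] /dIE/andP[m'x xm'] z /dIE/andP[mz zm]; apply/dIE.
move: m'x xm'; have [d d0 ->] := exprz2_split ll'.
have d0R : 0 < (d%:~R : R) by rewrite ltr0z.
rewrite !invfM !mulrA ltr_pdivlMr // ler_pdivrMr // -!intrM => m'x xm'.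
rewrite ltr_pdivlMr // ler_pdivrMr // -!intrM.
have lo : (m' * d < m + 1)%R by rewrite -(ltr_int R); exact: lt_le_trans m'x xm.
have hi : (m < (m' + 1) * d)%R by rewrite -(ltr_int R); exact: lt_le_trans mx xm'.
apply/andP; split; first by apply: le_lt_trans mz; rewrite ler_int; lia.
by apply: le_trans zm _; rewrite ler_int; lia.
Qed.

Lemma dI_itv m l : dI m l = `](2 ^ l * m%:~R), (2 ^ l * (m + 1)%:~R)]%classic.
Proof. by apply/seteqP; split => x /=; rewrite in_itv /= => /andP. Qed.

Lemma dI_measurable m l : measurable (dI m l).
Proof. by rewrite dI_itv; exact: measurable_itv. Qed.

Lemma lebesgue_measure_dI m l : lebesgue_measure (dI m l) = ((2:R) ^ l)%:E.
Proof.
rewrite dI_itv lebesgue_measure_itv /= lte_fin ltr_pM2l ?exprz2_gt0 // ltr_int ltzD1.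
by rewrite lexx -EFinD intrD mulrDr addrAC subrr add0r mulr1.
Qed.

Lemma strip_point i x : dI i.1 i.2 x -> strip i ((x, 2 ^ i.2), 0).
Proof. by split => //; split => //; exact: exprz2_gt0. Qed.

Lemma strip_neq0 i : strip i !=set0.
Proof. by eexists; apply/strip_point/dI_right_endpoint. Qed.

Lemma pi1_strip i : pi1 @` strip i = dI i.1 i.2.
Proof.
apply/seteqP; split => [x [p [ip _] <-] //|x ix].
by exists ((x, 2 ^ i.2), 0); first exact: strip_point.
Qed.

Lemma pi1_bigcup_strip (D : set (int * int)) :
  pi1 @` (\bigcup_(i in D) strip i) = \bigcup_(i in D) dI i.1 i.2.
Proof.
apply/seteqP; split => [x [p [i Di [ip _]] <-]|x [i Di ix]]; first by exists i.
by exists ((x, 2 ^ i.2), 0) => //; exists i => //; exact: strip_point.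
Qed.

Lemma strip_subE i j :
  strip i `<=` strip j <-> i.2 <= j.2 /\ dI i.1 i.2 `<=` dI j.1 j.2.
Proof.
split => [ij|[lij Iij] p [ip [p0 pl]]]; last first.
  by split; [exact: Iij|split => //; apply: le_trans pl _; rewrite ler_exprz2].
split; last by move=> x /strip_point /ij [].
by rewrite -ler_exprz2; have [_ []] := ij _ (strip_point (dI_right_endpoint i.1 i.2)).
Qed.

Lemma strip_nested i j x : i.2 <= j.2 -> dI i.1 i.2 x -> dI j.1 j.2 x ->
  strip i `<=` strip j.
Proof. by move=> lij ix jx; apply/strip_subE; split => //; exact: dI_nested ix jx. Qed.

Lemma strips_meet_nested i j : strip i `&` strip j !=set0 ->
  strip i `<=` strip j \/ strip j `<=` strip i.
Proof.
case=> p [[ip _] [jp _]]; have [lij|lji] := lerP i.2 j.2.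
  by left; exact: strip_nested lij ip jp.
by right; exact: strip_nested (ltW lji) jp ip.
Qed.

Lemma strip_inj : injective strip.
Proof.
move=> [m l] [m' l'] e.
have /strip_subE [/= ll' /(_ _ (dI_right_endpoint m l)) Im] : strip (m, l) `<=` strip (m', l').
  by rewrite e.
have /strip_subE [/= l'l _] : strip (m', l') `<=` strip (m, l) by rewrite e.
have el : l = l' by apply/eqP; rewrite eq_le ll' l'l.
by rewrite -el in Im *; rewrite (dI_unique (dI_right_endpoint m l) Im).
Qed.

Lemma dyadic_level (s : R) : 0 < s -> exists l, 2 ^ (l - 1) < s /\ s <= 2 ^ l.
Proof.
move=> s0; pose N := maxn (Num.bound s) (Num.bound s^-1).
have sN : s <= 2 ^ (N%:Z) by rewrite -exprnP ltW // upper_nthrootP ?leq_maxl.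
have Ns : 2 ^ (- N%:Z) < s.
  rewrite -invr_expz -[s]invrK ltf_pV2 ?posrE ?invr_gt0 ?exprz2_gt0 //.
  by rewrite -exprnP upper_nthrootP ?leq_maxr.
have ex : exists k : nat, s <= 2 ^ (k%:Z - N%:Z) by exists (N + N)%N; rewrite PoszD addrK.
have [k sk kmin] := ex_minnP ex.
exists (k%:Z - N%:Z); split => //; case: k sk kmin => [|k] sk kmin.
  by move: sk; rewrite sub0r leNgt Ns.
rewrite ltNge; apply/negP => sk'.
suff : (k.+1 <= k)%N by rewrite ltnn.
by apply: kmin; rewrite (_ : k%:Z - N%:Z = k.+1%:Z - N%:Z - 1) //; lia.
Qed.

Section covering.
Variable L : int.
Local Notation sigma := (@sigma R).
Local Notation tau := (@tau R).
Local Notation leb := (@lebesgue_measure R).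
Local Notation calN := (@calN R L).
Local Notation calQ := (@calQ R L).
Local Notation calC := (@calC R L).
Local Notation calM := (@calM R).
Local Notation pairwise_disjoint_strips := (@pairwise_disjoint_strips R).
Implicit Types (D P J : set (int * int)) (A : set (pt R)).

Definition shadow D : set R := \bigcup_(i in D) dI i.1 i.2.

Lemma shadow_measurable D : measurable (shadow D).
Proof. by apply: bigcup_measurable_countable => i _; exact: dI_measurable. Qed.

Lemma calNE D j : calN D j <->
  stripIdx L j /\ (((2:R) ^ (j.2 - 1))%:E <= leb (dI j.1 j.2 `&` shadow D))%E.
Proof.
by rewrite /Defs.calN /= pi1_strip pi1_bigcup_strip lebesgue_measure_dI -EFinM exprz2_pred.
Qed.

Lemma trivIset_dI P : pairwise_disjoint_strips P -> trivIset P (fun i => dI i.1 i.2).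
Proof.
move=> dP i j Pi Pj [x [ix jx]]; apply: strip_inj.
apply: contrapT => /(dP i j Pi Pj) ij0; have [lij|lji] := lerP i.2 j.2.
  by have := strip_neq0 i; rewrite -(setIidl (strip_nested lij ix jx)) ij0; case.
by have := strip_neq0 j; rewrite -(setIidr (strip_nested (ltW lji) jx ix)) ij0; case.
Qed.

Lemma esum_dI_le P (X : set R) : pairwise_disjoint_strips P -> measurable X ->
  (\esum_(i in P) leb (dI i.1 i.2 `&` X) <= leb X)%E.
Proof.
move=> dP mX; have mdIX i : measurable (dI i.1 i.2 `&` X).
  exact: measurableI (dI_measurable _ _) mX.
have <- : leb (\bigcup_(i in P) (dI i.1 i.2 `&` X)) = \esum_(i in P) leb (dI i.1 i.2 `&` X).
  by apply: measure_bigcup_countable => [i _|]; [exact: mdIX|exact/trivIset_setIr/trivIset_dI].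
apply: le_measure; rewrite ?inE //; last by move=> x [i _ []].
by apply: bigcup_measurable_countable => i _; exact: mdIX.
Qed.

Lemma leb_shadow_le D : (leb (shadow D) <= \esum_(i in D) (sigma i)%:E)%E.
Proof.
rewrite (eq_esum (b := fun i => leb (dI i.1 i.2))) => [|i _]; last exact/esym/lebesgue_measure_dI.
by apply: measure_bigcup_countable_le => i _; exact: dI_measurable.
Qed.

Lemma calM_above D j : D `<=` stripIdx L -> D j ->
  exists2 k, calM D k & strip j `<=` strip k.
Proof.
move=> DL; have [n] := ubnP `|L - j.2|%N; elim: n j => // n IHn j jn Dj.
have [Mj|nMj] := pselect (calM D j); first by exists j.
have [j' [Dj' jj' j'j]] : exists j', [/\ D j', strip j `<=` strip j' & strip j' <> strip j].
  apply: contrapT => nj'; apply: nMj; split => // j' Dj' jj'.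
  by apply: contrapT => j'j; apply: nj'; exists j'.
have lj : j.2 < j'.2.
  have /strip_subE [_ /(_ _ (dI_right_endpoint j.1 j.2)) jx] := jj'.
  rewrite ltNge; apply/negP => lj'; apply: j'j; apply/seteqP; split => //.
  exact: strip_nested lj' jx (dI_right_endpoint j.1 j.2).
have j'n : (`|L - j'.2| < n)%N.
  by have := DL _ Dj'; have := DL _ Dj; rewrite /stripIdx /= -ltz_nat in jn *; lia.
have [k Mk j'k] := IHn j' j'n Dj'.
by exists k => //; exact: subset_trans j'k.
Qed.

Lemma calM_disjoint D : pairwise_disjoint_strips (calM D).
Proof.
move=> i j [Di Mi] [Dj Mj] ij; apply/eqP/negPn/negP => /set0P /strips_meet_nested.
by case=> [/(Mi _ Dj)|/(Mj _ Di)] e; apply: ij.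
Qed.

Lemma calN_sub_stripIdx D : calN D `<=` stripIdx L.
Proof. by move=> j []. Qed.

Lemma calQ_sub_calN A : calQ A `<=` calN (calQ A).
Proof.
move=> j Qj; apply/calNE; split; first by case: Qj.
rewrite setIidl; last by move=> x jx; exists j.
by rewrite lebesgue_measure_dI lee_fin ler_exprz2 gerBl.
Qed.

Lemma calQ_mono A A' : A `<=` A' -> calQ A `<=` calQ A'.
Proof. by move=> AA' j [jL [p [jp Ap]]]; split => //; exists p; split => //; exact: AA'. Qed.

Lemma calN_mono D D' : D `<=` D' -> calN D `<=` calN D'.
Proof.
move=> DD' j /calNE [jL jD]; apply/calNE; split => //; apply: le_trans jD _.
apply: le_measure; rewrite ?inE; try exact: measurableI (dI_measurable _ _) (shadow_measurable _).
by apply: setIS => x [i Di ix]; exists i => //; exact: DD'.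
Qed.

Lemma BC_calC_mono A A' : A `<=` A' -> BC calC A `<=` BC calC A'.
Proof.
move=> AA' p [k [Nk _] kp]; have Nk' := calN_mono (calQ_mono AA') Nk.
have [k' Mk' kk'] := calM_above (@calN_sub_stripIdx _) Nk'.
by exists k' => //; exact: kk'.
Qed.

Lemma sub_BC_calC A : A `<=` YL L -> A `<=` BC calC A.
Proof.
move=> AY p Ap; have [s0 sL] := AY p Ap.
have [l [ls sl]] := dyadic_level s0; have [m xm] := dI_cover l p.1.1.
have Qml : calQ A (m, l).
  split; first by rewrite /stripIdx /= -ltr_exprz2_pred; exact: lt_le_trans sL.
  by exists p; split => //; split => //; rewrite /sigma /= -exprz2_pred.
have [k Mk mlk] := calM_above (@calN_sub_stripIdx _) (calQ_sub_calN Qml).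
by exists k => //; exact: mlk.
Qed.

Lemma shadow_calQ_sub A J : A `<=` \bigcup_(j in J) strip j ->
  shadow (calQ A) `<=` shadow J.
Proof.
move=> AJ x [i [_ [p [[ip ip2] Ap]]] ix]; have [j Jj jp] := AJ p Ap.
have lij : i.2 <= j.2.
  by rewrite -ltr_exprz2_pred exprz2_pred; exact: lt_le_trans ip2 jp.2.2.
by exists j => //; have /strip_subE [_] := strip_nested lij ip.1 jp.1; apply.
Qed.

Lemma esum_calC_le A J : A `<=` \bigcup_(j in J) strip j ->
  (\esum_(k in calC A) (sigma k)%:E <= 2%:E * \esum_(j in J) (sigma j)%:E)%E.
Proof.
move=> AJ; pose X := shadow (calQ A); have two0 : (0 <= 2%:E :> \bar R)%E by [].
apply: (@le_trans _ _ (\esum_(k in calC A) (2%:E * leb (dI k.1 k.2 `&` X)))%E).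
  apply: le_esum => k [/calNE [_ kX] _]; apply: le_trans (lee_wpmul2l two0 kX).
  by rewrite -EFinM exprz2_pred mulrC divfK.
rewrite ge0_esumZl // lee_wpmul2l //.
apply: le_trans (esum_dI_le (@calM_disjoint _) (shadow_measurable _)) _.
apply: le_trans (leb_shadow_le J); apply: le_measure; rewrite ?inE; try exact: shadow_measurable.
exact: shadow_calQ_sub.
Qed.

Lemma mu_ge0 A : (0 <= mu L A)%E.
Proof.
apply: le_ereal_inf_tmp => _ [J [_ _ ->]].
by apply: esum_ge0 => j _; rewrite lee_fin ltW ?exprz2_gt0.
Qed.

Lemma esum_calC_le_mu A : (\esum_(k in calC A) (sigma k)%:E <= 2%:E * mu L A)%E.
Proof.
rewrite /mu -ereal_inf_pZl //; apply: le_ereal_inf_tmp => _ [_ [J [_ AJ ->]] <-].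
exact: esum_calC_le.
Qed.

Lemma mu_covering_calC Phi : 2 <= Phi -> mu_covering L calC Phi.
Proof.
move=> Phi2; split=> [A AY|A A' _ _]; last exact: BC_calC_mono.
split; [by move=> k [[]]|exact: calM_disjoint|exact: sub_BC_calC|].
have BCle : (mu L (BC calC A) <= \esum_(k in calC A) (sigma k)%:E)%E.
  by apply: ereal_inf_lbound; exists (calC A); split => // k [[]].
apply: le_trans BCle (le_trans (esum_calC_le_mu A) _).
by rewrite lee_wpmul2r ?mu_ge0 ?lee_fin.
Qed.

Lemma calC_disjoint_calA calA F : calA `<=` stripIdx L ->
  F `&` \bigcup_(j in calM calA) strip j = set0 -> calC F `&` calA = set0.
Proof.
move=> AL F0; apply/seteqP; split => // E [[NE ME] AE].
have [D MD ED] := calM_above AL AE; have /strip_subE [lED IED] := ED.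
have [x [xE [E' QE' xE']]] : dI E.1 E.2 `&` shadow (calQ F) !=set0.
  apply/set0P/negP => /eqP E0; have [_] := (calNE _ _).1 NE.
  by rewrite E0 measure0 lee_fin leNgt exprz2_gt0.
have [_ [q [[E'q _] Fq]]] := QE'.
have [lE'D|lDE'] := lerP E'.2 D.2.
  suff : (F `&` \bigcup_(j in calM calA) strip j) q by rewrite F0.
  by split => //; exists D => //; exact: strip_nested lE'D xE' (IED _ xE) _ E'q.
have EE' : strip E `<=` strip E' by exact: strip_nested (le_trans lED (ltW lDE')) xE xE'.
have /strip_inj eE := ME E' (calQ_sub_calN QE') EE'.
by move: lDE'; rewrite eE ltNge lED.
Qed.

Lemma BC_calC_crop calA F : calA `<=` stripIdx L ->
  F `&` \bigcup_(j in calM calA) strip j = set0 ->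
  BC calC F = \bigcup_(j in calC F `\` calA) strip j.
Proof. by move=> AL F0; rewrite setDidl //; exact: calC_disjoint_calA. Qed.

(* The paper's N(n, l'), computed from the right endpoint of I(n, -l). *)
Definition treeN (n l l' : int) : int :=
  Num.ceil ((2 ^ (- l) * (n + 1)%:~R : R) / 2 ^ (- l')) - 1.

Lemma dI_sub_treeN n l l' : l' <= l -> dI n (- l) `<=` dI (treeN n l l') (- l').
Proof.
move=> l'l; apply: (dI_nested _ (dI_right_endpoint n (- l))); first by rewrite lerN2.
exact/dIE_ceil.
Qed.

(* A tree taller than the strip j is cut down to the tree with top interval
   I(j) whose frequency interval contains that of the original tree. *)
Definition tree_restrict (j : int * int) (t : int * int * int) : int * int * int :=
  if t.1.2 <= j.2 then t else (j, treeN t.2 t.1.2 j.2).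

Lemma tree_sub_strip t : tree t `<=` strip t.1.
Proof.
case: t => [[m l] n] p [m' [l' [n' [l'l Im' _ [pm' [pl' [pl _]]]]]]].
split; first exact: Im'.
by split; [exact: lt_trans (exprz2_gt0 _) pl'|apply: le_trans pl _; rewrite ler_exprz2].
Qed.

Lemma tree_restrictP j t : tree t `&` strip j `<=` tree (tree_restrict j t).
Proof.
rewrite /tree_restrict; case: ifPn => [_ p []//|]; rewrite -ltNge.
case: t j => [[m l] n] [mj lj] /= ljl p.
move=> [[m' [l' [n' [l'l _ In' [pm' [pl' [pl pn']]]]]]] [pj [_ plj]]].
have l'lj : l' <= lj by rewrite -ltr_exprz2_pred; exact: lt_le_trans pl' plj.
exists m', l', n'; split => //; first exact: dI_nested l'lj pm' pj.
apply: (dI_nested _ (dI_sub_treeN (ltW ljl) (dI_right_endpoint n (- l)))).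
  by rewrite lerN2.
exact/In'/dI_right_endpoint.
Qed.

Lemma treeIdx_restrict j t : stripIdx L j -> treeIdx L t -> treeIdx L (tree_restrict j t).
Proof. by rewrite /tree_restrict; case: ifP. Qed.

Lemma tau_restrict j t : dI j.1 j.2 `&` dI t.1.1 t.1.2 !=set0 ->
  (tau (tree_restrict j t))%:E = leb (dI j.1 j.2 `&` dI t.1.1 t.1.2).
Proof.
case=> x [jx tx]; rewrite /tree_restrict /tau; case: ifPn => [tj|]; last rewrite -ltNge => jt.
  by rewrite setIidr ?lebesgue_measure_dI //; exact: dI_nested tj tx jx.
by rewrite setIidl ?lebesgue_measure_dI //; exact: dI_nested (ltW jt) jx tx.
Qed.

Lemma nu_ge0 A : (0 <= nu L A)%E.
Proof.
apply: le_ereal_inf_tmp => _ [J [_ _ ->]].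
by apply: esum_ge0 => t _; rewrite lee_fin ltW ?exprz2_gt0.
Qed.

Lemma nu_strip_le j (J : set (int * int * int)) A : stripIdx L j -> J `<=` treeIdx L ->
  A `&` strip j `<=` \bigcup_(t in J) tree t ->
  (nu L (A `&` strip j) <= \esum_(t in J) leb (dI j.1 j.2 `&` dI t.1.1 t.1.2))%E.
Proof.
move=> jL JL AjJ; pose J' := [set t | J t /\ dI j.1 j.2 `&` dI t.1.1 t.1.2 !=set0].
apply: (@le_trans _ _ (\esum_(s in tree_restrict j @` J') (tau s)%:E)%E).
  apply: ereal_inf_lbound; exists (tree_restrict j @` J'); split => //.
    by move=> _ [t [Jt _] <-]; exact/treeIdx_restrict/JL.
  move=> p [Ap jp]; have [t Jt tp] := AjJ p (conj Ap jp).
  exists (tree_restrict j t); last exact: tree_restrictP.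
  by exists t => //; split => //; exists p.1.1; split; [exact: jp.1|exact: (tree_sub_strip tp).1].
apply: le_trans (le_esum_image _ _ _) _ => [s|]; first by rewrite lee_fin ltW ?exprz2_gt0.
rewrite (eq_esum (b := fun t => leb (dI j.1 j.2 `&` dI t.1.1 t.1.2))) => [|t [_]].
  by apply: le_esum_subset => [t|t []].
exact: tau_restrict.
Qed.

Lemma nu_superadditive P U : pairwise_disjoint_strips P -> P `<=` stripIdx L ->
  (\esum_(j in P) nu L (U `&` strip j) <= nu L (U `&` \bigcup_(j in P) strip j))%E.
Proof.
move=> dP PL; apply: le_ereal_inf_tmp => _ [J [JL UJ ->]].
apply: (@le_trans _ _ (\esum_(j in P) \esum_(t in J) leb (dI j.1 j.2 `&` dI t.1.1 t.1.2))%E).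
  apply: le_esum => j Pj; apply: nu_strip_le => // [|p [Up jp]]; first exact: PL.
  by apply: UJ; split => //; exists j.
rewrite esum_swap //; apply: le_esum => t Jt; rewrite /tau -(lebesgue_measure_dI t.1.1).
exact: esum_dI_le dP (dI_measurable _ _).
Qed.

Lemma nu_caratheodory_calM (K : R) calA : 1 <= K -> calA `<=` stripIdx L ->
  nu_caratheodory L K (calM calA).
Proof.
move=> K1 AL; split => [|U _]; first exact: calM_disjoint.
apply: le_trans (nu_superadditive U (@calM_disjoint _) (fun j Mj => AL j Mj.1)) _.
by rewrite -[leLHS]mul1e lee_wpmul2r ?nu_ge0 ?lee_fin.
Qed.

End covering.

End dyadic.

Theorem lemma4p7 (R : realType) (L : int) (Phi K : R) :
  2 <= Phi -> 1 <= K -> crop_condition L (@calC R L) Phi K.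
Proof.
move=> Phi2 K1; split; first exact: mu_covering_calC.
move=> calA AL; exists (calM R calA); split; first by move=> j [].
  exact: nu_caratheodory_calM.
by move=> F _; exact: BC_calC_crop.
Qed.
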